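(* Let $n \ge 1$ and let $v_1,\dots,v_n > 0$. Consider the tit-for-tat dynamic on players $N=\{1,\dots,n\}$ with values $v_1,\dots,v_n$, started from a non-degenerate configuration: $x_i(0)>0$ for all $i$, and $y_{i,j}(0)>0$ for all $i,j$ with $\sum_{j=1}^n y_{i,j}(0)=1$ for each $i$. Let $v^* = \max_{k\in[n]} v_k$. Let $i$ be any player and $j$ any player with $v_j < v^*$. Then $\lim_{t\to\infty} y_{i,j}(t) = 0$.
   Context: Tit-for-tat dynamic: there are $n$ players; player $i$ produces good $i$, and each unit of good $j$ used as input by any player yields $v_j$ units of that player's own good. At time $t$, player $i$ holds an amount $x_i(t)$ of good $i$ and allocates it according to fractions $y_{i,j}(t)\ge 0$, $\sum_j y_{i,j}(t)=1$ ($y_{i,j}(t)$ is the fraction of good $i$ given to player $j$). At each time $t$: (Exchange) every player $i$ receives $w_{i,j}(t) = y_{j,i}(t)\, x_j(t)$ units of each good $j$; (Production) $x_i(t+1) = \sum_{j=1}^n v_j\, w_{i,j}(t)$; (Fractions update) $y_{i,j}(t+1) = \dfrac{v_j\, w_{i,j}(t)}{x_i(t+1)}$. *)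

From HB Require Import structures.
From mathcomp Require Import all_boot all_order all_algebra.
From mathcomp Require Import all_classical all_reals all_analysis.
Set Implicit Arguments. Unset Strict Implicit. Unset Printing Implicit Defensive.
Import Order.TTheory GRing.Theory Num.Theory.
Local Open Scope ring_scope.

Definition tft_config (R : realType) (n : nat) : Type :=
  ('I_n -> R) * ('I_n -> 'I_n -> R).

Definition tft_step (R : realType) (n : nat) (v : 'I_n -> R)
  (s : tft_config R n) : tft_config R n :=
  let x := s.1 in
  let y := s.2 in
  (* w i j = amount of good j received by player i *)
  let w := fun i j : 'I_n => y j i * x j in
  let x' := fun i : 'I_n => \sum_(j < n) v j * w i j in
  (x', fun i j : 'I_n => v j * w i j / x' i).

Definition tft_state (R : realType) (n : nat) (v : 'I_n -> R)
  (x0 : 'I_n -> R) (y0 : 'I_n -> 'I_n -> R) (t : nat) : tft_config R n :=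
  iter t (tft_step v) (x0, y0).

Definition tft_x (R : realType) (n : nat) (v : 'I_n -> R)
  (x0 : 'I_n -> R) (y0 : 'I_n -> 'I_n -> R) (t : nat) : 'I_n -> R :=
  (tft_state v x0 y0 t).1.

Definition tft_y (R : realType) (n : nat) (v : 'I_n -> R)
  (x0 : 'I_n -> R) (y0 : 'I_n -> 'I_n -> R) (t : nat) : 'I_n -> 'I_n -> R :=
  (tft_state v x0 y0 t).2.

Definition vstar (R : realType) (n : nat) (v : 'I_n -> R) : R :=
  \big[Num.max/0]_(k < n) v k.

(** The amount w_{i,j}(t) of good j that player i receives satisfies
    w_{i,j}(t+1) = v_i w_{j,i}(t), hence w_{i,j}(t+2) = v_i v_j w_{i,j}(t).
    Since y_{i,j}(t) = w_{j,i}(t) / x_i(t), every two steps the ratio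
    y_{i,j}(t) / y_{i,k}(t) is multiplied by v_j / v_k.  Choosing k with
    v_k = v^* > v_j, this ratio tends to 0 geometrically, and it dominates
    y_{i,j}(t) because y_{i,k}(t) <= 1. *)

From HB Require Import structures.
From mathcomp Require Import all_boot all_order all_algebra.
From mathcomp Require Import all_classical all_reals all_analysis.
From mathcomp Require Import ring.
Import Order.TTheory GRing.Theory Num.Theory numFieldNormedType.Exports.
Set Implicit Arguments. Unset Strict Implicit. Unset Printing Implicit Defensive.
Local Open Scope classical_set_scope.
Local Open Scope ring_scope.

Lemma two_step_geometric (R : pzSemiRingType) (u : nat -> R) (q : R) :
  (forall t, u t.+2 = q * u t) -> forall t, u t = q ^+ t./2 * u (odd t).
Proof.
move=> uSS t; rewrite -{1}(odd_double_half t) addnC.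
elim: t./2 => [|m IHm]; first by rewrite mul1r.
by rewrite doubleS !addSn uSS IHm exprS mulrA.
Qed.

Lemma cvg_two_step_contraction (R : realType) (u : nat -> R) (q : R) :
  `|q| < 1 -> (forall t, u t.+2 = q * u t) -> u @ \oo --> 0.
Proof.
move=> q_lt1 uSS; apply: norm_cvg0.
set c := `|u 0%N| + `|u 1%N|.
have half_cvg : (fun t => `|q| ^+ t./2) @ \oo --> 0.
  have -> : (fun t => `|q| ^+ t./2) = GRing.exp `|q| \o divn^~ 2.
    by apply: funext => t; rewrite /= divn2.
  by apply: cvg_comp; [exact: cvg_divnr | apply: cvg_expr; rewrite normr_id].
apply: (@squeeze_cvgr _ _ _ _ (cst 0) (fun t => `|q| ^+ t./2 * c)).
- apply: nearW => t; rewrite normr_ge0 (two_step_geometric uSS) normrM normrX.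
  by rewrite ler_wpM2l ?exprn_ge0 //; case: (odd t); rewrite ?lerDl ?lerDr.
- exact: cvg_cst.
- by rewrite -(mul0r c); apply: cvgMr_tmp.
Qed.

Lemma vstarE (R : realType) (n : nat) (v : 'I_n -> R) (i0 : 'I_n) :
  (forall k, 0 <= v k) -> vstar v = v [arg max_(k > i0) v k]%O.
Proof. by move=> v_ge0; apply: bigmax_eq_arg. Qed.

Section TitForTat.
Variables (R : realType) (n : nat) (v : 'I_n -> R).
Variables (x0 : 'I_n -> R) (y0 : 'I_n -> 'I_n -> R).
Hypotheses (v_gt0 : forall k, 0 < v k) (x0_gt0 : forall i, 0 < x0 i).
Hypothesis y0_gt0 : forall i j, 0 < y0 i j.

Let x := tft_x v x0 y0.
Let y := tft_y v x0 y0.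

Definition tft_w t i j := y t j i * x t j.

Lemma tft_xS t i : x t.+1 i = \sum_(j < n) v j * tft_w t i j.
Proof. by []. Qed.

Lemma tft_yS t i j : y t.+1 i j = v j * tft_w t i j / x t.+1 i.
Proof. by []. Qed.

Lemma tft_gt0 t : (forall i, 0 < x t i) /\ (forall i j, 0 < y t i j).
Proof.
elim: t => [|t [x_gt0 y_gt0]]; first by [].
have xS_gt0 i : 0 < x t.+1 i.
  rewrite tft_xS (bigD1 i) //= ltr_pwDl ?mulr_gt0 //.
  by apply: sumr_ge0 => j _; rewrite ltW ?mulr_gt0.
by split=> // i j; rewrite tft_yS divr_gt0 ?mulr_gt0.
Qed.

Lemma tft_x_gt0 t i : 0 < x t i.
Proof. by case: (tft_gt0 t) => ->. Qed.

Lemma tft_y_gt0 t i j : 0 < y t i j.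
Proof. by case: (tft_gt0 t) => _ ->. Qed.

Lemma tft_w_gt0 t i j : 0 < tft_w t i j.
Proof. by rewrite mulr_gt0 ?tft_x_gt0 ?tft_y_gt0. Qed.

Lemma tft_wS t i j : tft_w t.+1 i j = v i * tft_w t j i.
Proof. by rewrite /tft_w tft_yS divfK // gt_eqF ?tft_x_gt0. Qed.

Lemma tft_wSS t i j : tft_w t.+2 i j = v i * v j * tft_w t i j.
Proof. by rewrite !tft_wS mulrA. Qed.

Lemma tft_y_ratioE t i j k : y t i j / y t i k = tft_w t j i / tft_w t k i.
Proof. by rewrite /tft_w -mulf_div divff ?mulr1 // gt_eqF ?tft_x_gt0. Qed.

Lemma tft_y_ratioSS t i j k :
  y t.+2 i j / y t.+2 i k = v j / v k * (y t i j / y t i k).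
Proof.
rewrite !tft_y_ratioE !tft_wSS; field.
by rewrite !gt_eqF ?tft_w_gt0.
Qed.

Hypothesis y0_sum1 : forall i, \sum_(j < n) y0 i j = 1.

Lemma tft_y_sum1 t i : \sum_(j < n) y t i j = 1.
Proof.
case: t => [|t]; first exact: y0_sum1.
under eq_bigr => j _ do rewrite tft_yS.
by rewrite -mulr_suml -tft_xS divff // gt_eqF ?tft_x_gt0.
Qed.

Lemma tft_y_le1 t i j : y t i j <= 1.
Proof.
rewrite -(tft_y_sum1 t i) (bigD1 j) //= lerDl.
by apply: sumr_ge0 => k _; rewrite ltW ?tft_y_gt0.
Qed.

End TitForTat.

Theorem corollary1 (R : realType) (n : nat) (v : 'I_n -> R)
  (x0 : 'I_n -> R) (y0 : 'I_n -> 'I_n -> R) :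
  (0 < n)%N ->
  (forall k, 0 < v k) ->
  (forall i, 0 < x0 i) ->
  (forall i j, 0 < y0 i j) ->
  (forall i, \sum_(j < n) y0 i j = 1) ->
  forall i j : 'I_n, v j < vstar v ->
  (fun t : nat => tft_y v x0 y0 t i j) @ \oo --> 0%R.
Proof.
(* [n > 0] is already witnessed by the player [i]. *)
move=> _ v_gt0 x0_gt0 y0_gt0 y0_sum1 i j vj_lt.
set y := tft_y v x0 y0; set k := [arg max_(k > i) v k]%O.
have vjk : v j < v k by rewrite -vstarE // => l; rewrite ltW.
have ratio_cvg : (fun t => y t i j / y t i k) @ \oo --> 0.
  apply: (@cvg_two_step_contraction _ _ (v j / v k)).
    by rewrite ger0_norm ?divr_ge0 ?ltW // ltr_pdivrMr // mul1r.
  by move=> t; rewrite tft_y_ratioSS.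
apply: (squeeze_cvgr _ (cvg_cst 0) ratio_cvg); apply: nearW => t.
rewrite ltW ?tft_y_gt0 //= ler_pdivlMr ?tft_y_gt0 //.
by rewrite ler_piMr ?tft_y_le1 ?ltW ?tft_y_gt0.
Qed.
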